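(* Assume the reduced model family $(V_k)_{k=1,\dots,K}$ is $(\varepsilon,\mu)$-admissible for some $\varepsilon>0$ and $\mu\ge1$. Let $u\in V$ satisfy $\operatorname{dist}(u,\mathcal M)\le\varepsilon_{model}$. Let the observation be $w=P_Wu+\eta$ with $\eta\in W$ and $\|\eta\|\le\varepsilon_{noise}$. Then the estimator obtained by surrogate model selection satisfies $$\|u-u^*(w)\|\le\delta_{\kappa\rho}+\varepsilon_{noise},\qquad \rho:=\mu(\varepsilon+\varepsilon_{noise})+(\mu+1)\varepsilon_{model},\quad\kappa=R/r.$$ For the idealized selection (minimizing $\operatorname{dist}(u_k^*(w),\mathcal M)$), the same bound holds with $\kappa=1$.
   Context: Let $V$ be a real Hilbert space with norm $\|\cdot\|$. Let $Y\subset\mathbb R^d$ be compact and let $y\mapsto u(y)$ be a continuous map from $Y$ to $V$. Set $\mathcal M=\{u(y):y\in Y\}$, which is compact. Let $W\subset V$ be a linear subspace of finite dimension $m$, let $P_W$ be the orthogonal projection onto $W$, and let $W^\perp$ be its orthogonal complement. For $w\in W$ put $V_w=w+W^\perp$. For $\sigma\ge 0$ define - $\mathcal M_\sigma=\{v\in V:\operatorname{dist}(v,\mathcal M)\le\sigma\}$; - $\delta_\sigma=\sup\{\|u-v\|: u,v\in\mathcal M_\sigma,\ u-v\in W^\perp\}$. For a finite-dimensional subspace $E\subset V$ let $\mu(E,W)=\sup_{v\in E\setminus\{0\}}\|v\|/\|P_Wv\|$, with the conventions $\mu(\{0\},W)=1$ and $\mu(E,W)=+\infty$ if $E\cap W^\perp\ne\{0\}$.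 A reduced model family consists of: - sets $\mathcal M_1,\dots,\mathcal M_K$ with $\mathcal M=\bigcup_{k=1}^K\mathcal M_k$; - affine spaces $V_k=\bar u_k+\bar V_k$, where $\bar u_k\in V$ and $\bar V_k$ is a linear subspace of dimension $n_k\le m$; - numbers $\varepsilon_k\ge\sup_{u\in\mathcal M_k}\operatorname{dist}(u,V_k)$; - constants $\mu_k=\mu(\bar V_k,W)<\infty$. The family is $(\varepsilon,\mu)$-admissible if $\varepsilon_k\le\varepsilon$ and $\mu_k\le\mu$ for all $k$. For $w\in W$ the PBDW estimators are $u_k^*(w)=\operatorname{argmin}\{\operatorname{dist}(v,V_k): v\in V_w\}$, $k=1,\dots,K$ (the minimizer is unique). A surrogate is a function $\mathcal S(\cdot,\mathcal M):V\to[0,\infty)$ with $r\operatorname{dist}(v,\mathcal M)\le\mathcal S(v,\mathcal M)\le R\operatorname{dist}(v,\mathcal M)$ for all $v\in V$, where $0<r\le R$ are constants; set $\kappa=R/r$. Surrogate model selection picks $k^*(w)$ as any minimizer of $k\mapsto\mathcal S(u_k^*(w),\mathcal M)$ over $\{1,\dots,K\}$ and sets $u^*(w)=u^*_{k^*(w)}(w)$. *)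

From HB Require Import structures.
From mathcomp Require Import all_boot all_order all_algebra.
From mathcomp Require Import all_classical all_reals all_analysis.
Set Implicit Arguments. Unset Strict Implicit. Unset Printing Implicit Defensive.
Import Order.TTheory GRing.Theory Num.Theory.
Import numFieldNormedType.Exports.
Local Open Scope classical_set_scope.
Local Open Scope ring_scope.

Section PBDWDefs.
Variables (R : realType) (V : normedModType R).

Definition is_inner (ip : V -> V -> R) :=
  [/\ forall x y, ip x y = ip y x,
      forall (a : R) x y z, ip (a *: x + y) z = a * ip x z + ip y z &
      forall x, `|x| ^+ 2 = ip x x].

Definition span n (b : 'I_n -> V) : set V :=
  [set v | exists c : 'I_n -> R, v = \sum_(i < n) c i *: b i].

Definition lin_indep n (b : 'I_n -> V) :=
  forall c : 'I_n -> R, \sum_(i < n) c i *: b i = 0 -> forall i, c i = 0.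

Definition is_subspace_dim (E : set V) (n : nat) :=
  exists b : 'I_n -> V, lin_indep b /\ E = span b.

Definition orth (ip : V -> V -> R) (W : set V) : set V :=
  [set v | forall w, W w -> ip v w = 0].

Definition is_orth_proj (ip : V -> V -> R) (W : set V) (P : V -> V) :=
  forall v, W (P v) /\ orth ip W (v - P v).

Definition affine (u0 : V) (E : set V) : set V := [set u0 + e | e in E].

(* distance (in extended reals; dist v set0 = +oo) *)
Definition dist (v : V) (S : set V) : \bar R :=
  ereal_inf [set (`|v - s|)%:E | s in S].

Definition fattening (M : set V) (sigma : R) : set V :=
  [set v | (dist v M <= sigma%:E)%E].

Definition delta (ip : V -> V -> R) (W M : set V) (sigma : R) : \bar R :=
  ereal_sup [set z | exists x y, [/\ fattening M sigma x, fattening M sigma y,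
                                     orth ip W (x - y) & z = (`|x - y|)%:E]].

Definition mu (ip : V -> V -> R) (W : set V) (PW : V -> V) (E : set V) : \bar R :=
  if `[< E = [set 0] >] then 1%E
  else if `[< exists v, [/\ E v, v <> 0 & orth ip W v] >] then +oo%E
  else ereal_sup [set (`|v| / `|PW v|)%:E | v in E `\ 0].

End PBDWDefs.

From HB Require Import structures.
From mathcomp Require Import all_boot all_order all_algebra.
From mathcomp Require Import all_classical all_reals all_analysis.
From mathcomp Require Import ring lra.
Set Implicit Arguments. Unset Strict Implicit. Unset Printing Implicit Defensive.
Import Order.TTheory GRing.Theory Num.Theory.
Import numFieldNormedType.Exports.
Local Open Scope classical_set_scope.
Local Open Scope ring_scope.

(* The heart of the proof is the classical PBDW estimate: if [z] is the point
   of [w + W^perp] closest to an affine space [ub + E] whose direction [E]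
   satisfies [|y| <= mu |P_W y|], then [|z - m| <= mu (|m - b| + |w - P_W m|)]
   for every [m] and every [b] in [ub + E] ([pbdw_error]).  Since the
   distance to [ub + E] need not be attained, [z] is compared with a
   near-closest point of [ub + E]: optimality makes the residual almost
   orthogonal to [W^perp + E] ([almost_orth], [pbdw_almost_orth]); the error
   is then split into its parts in [W] and in [W^perp] ([pbdw_geometry]) and
   estimated by a Cauchy-Schwarz computation on real numbers
   ([pbdw_scalar_bound]).

   For the theorem, the reduced model whose piece of [M] contains a point
   near [u] yields an estimate within [rho] of [M] ([near_manifold_estimate]);
   surrogate selection loses at most the factor [kappa = R / r], and exact
   selection nothing ([surrogate_selection], [ideal_selection]).  Finally an
   estimate in [M_sigma] that is consistent with the data is within
   [delta_sigma + eps_noise] of [u] ([error_from_fattening]). *)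

Section InnerProduct.
Variables (R : realType) (V : normedModType R) (ip : V -> V -> R).
Hypothesis hip : is_inner ip.

Lemma ipC x y : ip x y = ip y x. Proof. by case: hip. Qed.
Lemma ipL a x y z : ip (a *: x + y) z = a * ip x z + ip y z. Proof. by case: hip. Qed.
Lemma ip_norm x : ip x x = `|x| ^+ 2. Proof. by case: hip => _ _ ->. Qed.

Lemma ip0l z : ip 0 z = 0.
Proof. by have := ipL 1 0 0 z; rewrite scale1r addr0 mul1r; lra. Qed.
Lemma ipDl x y z : ip (x + y) z = ip x z + ip y z.
Proof. by rewrite -[x in LHS]scale1r ipL mul1r. Qed.
Lemma ipZl a x z : ip (a *: x) z = a * ip x z.
Proof. by rewrite -[_ *: _]addr0 ipL ip0l addr0. Qed.
Lemma ipDr x y z : ip z (x + y) = ip z x + ip z y.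
Proof. by rewrite ipC ipDl !(ipC z). Qed.
Lemma ipZr a x z : ip z (a *: x) = a * ip z x.
Proof. by rewrite ipC ipZl ipC. Qed.
Lemma ipNr x z : ip z (- x) = - ip z x.
Proof. by rewrite -scaleN1r ipZr mulN1r. Qed.
Lemma ipBr x y z : ip z (x - y) = ip z x - ip z y.
Proof. by rewrite ipDr ipNr. Qed.

Lemma normD2 x y : `|x + y| ^+ 2 = `|x| ^+ 2 + 2 * ip x y + `|y| ^+ 2.
Proof. by rewrite -!ip_norm ipDl !ipDr (ipC y x); lra. Qed.

Lemma ip_eq0 x : ip x x = 0 -> x = 0.
Proof. by rewrite ip_norm => /eqP; rewrite sqrf_eq0 normr_eq0 => /eqP. Qed.

(* If moving [p] along the line [p + t k] cannot push its norm below a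
   value [D] with [|p|^2 <= D^2 + gam^2], then [p] is [gam]-almost
   orthogonal to [k]: this is how approximate minimizers are exploited. *)
Lemma almost_orth p k (D gam : R) : 0 <= D -> 0 <= gam ->
  `|p| ^+ 2 <= D ^+ 2 + gam ^+ 2 -> (forall t : R, D <= `|p + t *: k|) ->
  `|ip p k| <= gam * `|k|.
Proof.
move=> hD hg hp ht.
have [->|hk] := eqVneq k 0; first by rewrite normr0 mulr0 -(scale0r 0) ipZr mul0r normr0.
set N := `|k| ^+ 2; set I := ip p k.
have hN : 0 < N by rewrite /N exprn_gt0 // normr_gt0.
set t := - I / N.
have hline : `|p + t *: k| ^+ 2 = `|p| ^+ 2 - I ^+ 2 / N.
  rewrite normD2 ipZr -(ip_norm (t *: k)) ipZl ipZr ip_norm -/I -/N /t.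
  by field; lra.
have hdrop : D ^+ 2 <= `|p + t *: k| ^+ 2.
  by have := ht t; have := normr_ge0 (p + t *: k); rewrite !expr2; nra.
have hI : I ^+ 2 <= (gam * `|k|) ^+ 2.
  by rewrite exprMn -/N -ler_pdivrMr //; lra.
have hgk : 0 <= gam * `|k| by apply: mulr_ge0.
by rewrite ler_norml; apply/andP; split; rewrite !expr2 in hI; nra.
Qed.

Lemma norm_le_almost_orth q v (gam : R) : 0 <= gam ->
  `|ip q v| <= gam * `|q| -> `|q| <= `|q + v| + 2 * gam.
Proof.
move=> hg; rewrite ler_norml => /andP[hlo _].
have hsum := normD2 q v.
have h0 := normr_ge0 q; have h1 := normr_ge0 (q + v).
have h2 := sqr_ge0 `|v|.
rewrite !expr2 in hsum h2; nra.
Qed.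

End InnerProduct.

Section Subspaces.
Variables (R : realType) (V : normedModType R).

Definition subsp (E : set V) := E 0 /\ forall a x y, E x -> E y -> E (a *: x + y).

Variable E : set V.
Hypothesis hE : subsp E.

Lemma subspD x y : E x -> E y -> E (x + y).
Proof. by case: hE => _ h ex ey; have := h 1 x y ex ey; rewrite scale1r. Qed.
Lemma subspZ a x : E x -> E (a *: x).
Proof. by case: hE => h0 h ex; have := h a x 0 ex h0; rewrite addr0. Qed.
Lemma subspN x : E x -> E (- x).
Proof. by move=> ex; rewrite -scaleN1r; apply: subspZ. Qed.
Lemma subspB x y : E x -> E y -> E (x - y).
Proof. by move=> ex ey; apply: subspD => //; apply: subspN. Qed.

End Subspaces.

Lemma subsp_dim (R : realType) (V : normedModType R) (E : set V) n :
  is_subspace_dim E n -> subsp E.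
Proof.
case=> b [_ ->]; split.
  by exists (fun=> 0); rewrite big1 // => i _; rewrite scale0r.
move=> a x y [c ->] [c' ->]; exists (fun i => a * c i + c' i).
rewrite scaler_sumr -big_split /=; apply: eq_bigr => i _.
by rewrite scalerDl scalerA.
Qed.

Lemma subsp_orth (R : realType) (V : normedModType R) (ip : V -> V -> R)
  (W : set V) : is_inner ip -> subsp (orth ip W).
Proof.
move=> hip; split; first by move=> w _; rewrite ip0l.
by move=> a x y hx hy w hw; rewrite ipL // hx // hy // mulr0 addr0.
Qed.

Lemma affineP (R : realType) (V : normedModType R) (u0 : V) (E : set V) v :
  affine u0 E v <-> E (v - u0).
Proof.
split; first by case=> e he <-; rewrite addrC addKr.
by move=> h; exists (v - u0) => //; rewrite addrC subrK.
Qed.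

Section Distance.
Variables (R : realType) (V : normedModType R) (S : set V).

Lemma dist_ge0 v : (0 <= dist v S)%E.
Proof. by apply: le_ereal_inf_tmp => _ [s _ <-]; rewrite lee_fin. Qed.

Lemma dist_le v s : S s -> (dist v S <= (`|v - s|)%:E)%E.
Proof. by move=> hs; apply: ereal_inf_lbound; exists s. Qed.

Lemma dist_approx v x : (dist v S < x%:E)%E -> exists2 s, S s & `|v - s| < x.
Proof. by move=> /ereal_inf_lt [_ [s hs <-]]; rewrite lte_fin; exists s. Qed.

Lemma dist_real v s0 : S s0 -> exists D : R, dist v S = D%:E /\ 0 <= D.
Proof.
move=> hs; have := dist_ge0 v; have := dist_le v hs.
by case: (dist v S) => [D _ hD||] //; exists D; rewrite -lee_fin.
Qed.

Lemma dist_lip x y (D : R) :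
  (dist y S <= D%:E)%E -> (dist x S <= (D + `|x - y|)%:E)%E.
Proof.
move=> hy; apply/lee_addgt0Pr => e he.
have [s hs hys] : exists2 s, S s & `|y - s| < D + e.
  by apply: dist_approx; apply: le_lt_trans hy _; rewrite lte_fin ltrDl.
apply: le_trans (dist_le x hs) _; rewrite -EFinD lee_fin.
by have := ler_distD y x s; rewrite distrC; lra.
Qed.

End Distance.

Section Projection.
Variables (R : realType) (V : normedModType R) (ip : V -> V -> R).
Hypothesis hip : is_inner ip.
Variables (W : set V) (P : V -> V).
Hypothesis hW : subsp W.
Hypothesis hP : is_orth_proj ip W P.

Let hWperp : subsp (orth ip W) := subsp_orth W hip.

Lemma proj_mem v : W (P v). Proof. by case: (hP v). Qed.
Lemma proj_orth v : orth ip W (v - P v). Proof. by case: (hP v). Qed.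

Lemma orth_ip x y : orth ip W x -> W y -> ip y x = 0.
Proof. by move=> hx hy; rewrite ipC //; apply: hx. Qed.

Lemma proj_uniq v q : W q -> orth ip W (v - q) -> P v = q.
Proof.
move=> hq ho; apply/eqP; rewrite -subr_eq0; apply/eqP; apply: (ip_eq0 hip).
have hd : W (P v - q) by apply: (subspB hW) => //; apply: proj_mem.
have ho' : orth ip W (P v - q).
  have -> : P v - q = (v - q) - (v - P v).
    by rewrite [in RHS]opprB [in RHS]addrC addrA subrK.
  exact: (subspB hWperp ho (proj_orth v)).
exact: ho' _ hd.
Qed.

Lemma projD x y : P (x + y) = P x + P y.
Proof.
apply: proj_uniq; first by apply: (subspD hW); apply: proj_mem.
rewrite opprD addrACA; apply: (subspD hWperp); exact: proj_orth.
Qed.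

Lemma projN x : P (- x) = - P x.
Proof.
apply: proj_uniq; first by apply: (subspN hW); apply: proj_mem.
rewrite opprK addrC -opprB; apply: (subspN hWperp); exact: proj_orth.
Qed.

Lemma projB x y : P (x - y) = P x - P y.
Proof. by rewrite projD projN. Qed.

Lemma complD x y : (x + y) - P (x + y) = (x - P x) + (y - P y).
Proof. by rewrite projD opprD addrACA. Qed.

Lemma proj_id x : W x -> P x = x.
Proof. by move=> hx; apply: proj_uniq => //; rewrite subrr; case: hWperp. Qed.

Lemma proj_orth0 x : orth ip W x -> P x = 0.
Proof. by move=> hx; apply: proj_uniq; [case: hW | rewrite subr0]. Qed.

Lemma norm_proj_split x : `|x| ^+ 2 = `|P x| ^+ 2 + `|x - P x| ^+ 2.
Proof.
have {1}-> : x = P x + (x - P x) by rewrite addrCA subrr addr0.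
rewrite (normD2 hip (P x)) (orth_ip (proj_orth x) (proj_mem x)).
by rewrite mulr0 addr0.
Qed.

Lemma norm_proj_le x : `|P x| <= `|x|.
Proof.
have := norm_proj_split x; have := sqr_ge0 `|x - P x|.
have := normr_ge0 (P x); have := normr_ge0 x; rewrite !expr2; nra.
Qed.

End Projection.

(* Here [nr] and [c] are the
   norms of the model error [r] and of the data error [tau]; [al], [be] the
   norms of the parts of [r] off and on [W]; [B] the norm of a projected
   approximation error; [nx] and [nz] the norms of the error components off
   [W] and in total; [s = sqrt (mu^2 - 1)], and [gam] an optimality slack. *)
Lemma pbdw_scalar_bound (R : realFieldType) (mu s gam al be c B nx nr nz : R) :
  1 <= mu -> 0 <= s -> s ^+ 2 = mu ^+ 2 - 1 -> 0 <= gam ->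
  0 <= al -> 0 <= be -> 0 <= c -> 0 <= nx -> 0 <= nr -> 0 <= nz ->
  nr ^+ 2 = be ^+ 2 + al ^+ 2 -> B <= be + c + 2 * gam ->
  nx <= al + gam + s * B -> nz ^+ 2 = c ^+ 2 + nx ^+ 2 ->
  nz <= mu * (nr + c) + (1 + 2 * s) * gam.
Proof.
move=> hmu hs hs2 hg hal hbe hc hnx hnr hnz hr hB hx hz.
have cauchy_schwarz : al + s * be <= mu * nr.
  have hsq : (al + s * be) ^+ 2 <= (mu * nr) ^+ 2.
    rewrite exprMn hr; have := sqr_ge0 (s * al - be).
    by rewrite !expr2 in hs2 *; nra.
  have h0 : 0 <= mu * nr by apply: mulr_ge0 => //; lra.
  have h1 : 0 <= s * be by apply: mulr_ge0.
  by rewrite !expr2 in hsq; nra.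
have hs_mu : s <= mu.
  have : s ^+ 2 <= mu ^+ 2 by rewrite hs2; lra.
  by rewrite !expr2; nra.
set X := mu * nr + (1 + 2 * s) * gam.
have hX : 0 <= X.
  by rewrite /X; apply: addr_ge0; apply: mulr_ge0 => //; nra.
have hnx_bound : nx <= X + s * c.
  have : s * B <= s * (be + c + 2 * gam) by apply: ler_wpM2l.
  by rewrite /X; lra.
have hsq : nz ^+ 2 <= (X + mu * c) ^+ 2.
  have hsc : 0 <= s * c by apply: mulr_ge0.
  have hXc : 0 <= X * c * (mu - s) by apply: mulr_ge0; [apply: mulr_ge0|lra].
  have hcc : s ^+ 2 * (c * c) = (mu ^+ 2 - 1) * (c * c) by rewrite hs2.
  by rewrite hz; rewrite !expr2 in hcc *; nra.
have hmc : 0 <= mu * c by apply: mulr_ge0 => //; lra.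
have -> : mu * (nr + c) + (1 + 2 * s) * gam = X + mu * c by rewrite /X; ring.
by rewrite !expr2 in hsq; nra.
Qed.

Section PBDWGeometry.
Variables (R : realType) (V : normedModType R) (ip : V -> V -> R).
Hypothesis hip : is_inner ip.
Variables (W : set V) (P : V -> V).
Hypothesis hW : subsp W.
Hypothesis hP : is_orth_proj ip W P.
Variables (mu s : R).
Hypothesis hmu : 1 <= mu.
Hypothesis hs : 0 <= s.
Hypothesis hs2 : s ^+ 2 = mu ^+ 2 - 1.

Lemma stable_off_W y : `|y| <= mu * `|P y| -> `|y - P y| <= s * `|P y|.
Proof.
move=> hy.
have hsplit := norm_proj_split hip hP y.
have h0 := normr_ge0 (P y); have h1 := normr_ge0 (y - P y).
have h2 := normr_ge0 y.
have hy2 : `|y| ^+ 2 <= mu ^+ 2 * `|P y| ^+ 2 by rewrite !expr2; nra.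
have hsq : `|y - P y| ^+ 2 <= (s * `|P y|) ^+ 2 by rewrite exprMn hs2; nra.
have hsPy : 0 <= s * `|P y| by apply: mulr_ge0.
by rewrite !expr2 in hsq; nra.
Qed.

(* The error [tau - x] splits into [tau] in [W] and [x] orthogonal to [W]. *)
Lemma pbdw_geometry (gam : R) r tau x p y : 0 <= gam -> W tau -> orth ip W x ->
  `|y| <= mu * `|P y| -> x + p + y = r + tau ->
  `|p - P p| <= gam -> `|ip p (P y)| <= gam * `|P y| ->
  `|tau - x| <= mu * (`|r| + `|tau|) + (1 + 2 * s) * gam.
Proof.
move=> hg htau hx hy hsum hp hpy.
have hPsum : P r + tau = P y + P p.
  have := congr1 P hsum; rewrite !(projD hip hW hP).
  rewrite (proj_orth0 hip hW hP hx) (proj_id hip hW hP htau) add0r addrC.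
  by move=> <-.
have hPy : `|P y| <= `|P r + tau| + 2 * gam.
  rewrite hPsum; apply: (norm_le_almost_orth hip hg).
  have := orth_ip hip (proj_orth hP p) (proj_mem hP y); rewrite ipBr // => h0.
  have -> : ip (P y) (P p) = ip (P y) p by lra.
  by rewrite ipC.
have hcompl : x + (p - P p) + (y - P y) = r - P r.
  have := congr1 (fun v => v - P v) hsum => /=.
  rewrite !(complD hip hW hP) (proj_orth0 hip hW hP hx) (proj_id hip hW hP htau).
  by rewrite subr0 subrr addr0.
have hnx : `|x| <= `|r - P r| + gam + s * `|P y|.
  have -> : x = (r - P r) - (y - P y) - (p - P p) by rewrite -hcompl !addrK.
  have := ler_normB (r - P r - (y - P y)) (p - P p).
  have := ler_normB (r - P r) (y - P y).
  have := stable_off_W hy; lra.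
apply: (pbdw_scalar_bound hmu hs hs2 hg) (normr_ge0 _) (normr_ge0 (P r))
  (normr_ge0 tau) (normr_ge0 x) (normr_ge0 r) (normr_ge0 _) _ _ hnx _.
- by rewrite (norm_proj_split hip hP r).
- by have := ler_normD (P r) tau; lra.
- rewrite (normD2 hip) ipNr // (orth_ip hip hx htau) normrN; lra.
Qed.

End PBDWGeometry.

(* The distance from [z] to [ub + E] need not be attained,
   so we work with approximate minimizers and let the slack go to zero. *)
Section PBDWEstimate.
Variables (R : realType) (V : normedModType R) (ip : V -> V -> R).
Hypothesis hip : is_inner ip.
Variables (W : set V) (P : V -> V).
Hypothesis hW : subsp W.
Hypothesis hP : is_orth_proj ip W P.
Variables (E : set V) (ub : V) (mu : R).
Hypothesis hE : subsp E.
Hypothesis hmu : 1 <= mu.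
Hypothesis hstable : forall y, E y -> `|y| <= mu * `|P y|.
Variables (w z : V).
Hypothesis hw : W w.
Hypothesis hz : affine w (orth ip W) z.
Hypothesis hzmin : forall v, affine w (orth ip W) v ->
  (dist z (affine ub E) <= dist v (affine ub E))%E.

Let hWperp : subsp (orth ip W) := subsp_orth W hip.

Lemma pbdw_almost_orth gam : 0 < gam -> exists2 a, affine ub E a &
  forall h g, orth ip W h -> E g -> `|ip (z - a) (h + g)| <= gam * `|h + g|.
Proof.
move=> hg.
have hub : affine ub E ub by apply/affineP; rewrite subrr; case: hE.
have [D [hD hD0]] := dist_real z hub.
have [a ha hza] : exists2 a, affine ub E a & `|z - a| ^+ 2 <= D ^+ 2 + gam ^+ 2.
  have hlt : D < Num.sqrt (D ^+ 2 + gam ^+ 2).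
    rewrite -{1}(ger0_norm hD0) -sqrtr_sqr ltr_sqrt; last first.
      by rewrite ltr_wpDl ?sqr_ge0 // exprn_gt0.
    by rewrite ltrDl exprn_gt0.
  have [a ha h] : exists2 a, affine ub E a & `|z - a| < Num.sqrt (D ^+ 2 + gam ^+ 2).
    by apply: dist_approx; rewrite hD lte_fin.
  exists a => //.
  have h0 := normr_ge0 (z - a).
  rewrite -(@sqr_sqrtr _ (D ^+ 2 + gam ^+ 2)); last by rewrite addr_ge0 ?sqr_ge0.
  by rewrite !expr2; nra.
exists a => // h g hh hgE; apply: (almost_orth hip hD0 (ltW hg) hza) => t.
have hzt : affine w (orth ip W) (z + t *: h).
  apply/affineP; rewrite addrAC; apply: (subspD hWperp); first exact/affineP.
  exact: (subspZ hWperp).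
have hat : affine ub E (a - t *: g).
  apply/affineP; rewrite addrAC -scaleNr; apply: (subspD hE); first exact/affineP.
  exact: (subspZ hE).
have := le_trans (hzmin hzt) (dist_le (z + t *: h) hat).
rewrite hD lee_fin scalerDr.
by rewrite opprB (addrC (t *: g)) addrACA.
Qed.

Let s := Num.sqrt (mu ^+ 2 - 1).

Lemma pbdw_error_slack m b gam : affine ub E b -> 0 < gam ->
  `|z - m| <= mu * (`|m - b| + `|w - P m|) + (1 + 2 * s) * gam.
Proof.
move=> hb hg.
have hs : 0 <= s by apply: sqrtr_ge0.
have hs2 : s ^+ 2 = mu ^+ 2 - 1 by rewrite sqr_sqrtr // subr_ge0 expr2 mulr_ege1.
have [a ha hperp] := pbdw_almost_orth hg.
(* [r] is the model error, [tau] the data error (in [W]), [x] lies in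
   [W^perp], [y] in [E], and [p] is the almost orthogonal residual. *)
set p := z - a; set r := m - b; set tau := w - P m; set x := m + tau - z.
set y := a - b.
have htau : W tau by apply: (subspB hW hw); apply: proj_mem hP m.
have hx : orth ip W x.
  have -> : x = (m + tau - w) - (z - w).
    by rewrite [in RHS]opprB [in RHS]addrA subrK.
  have -> : m + tau - w = m - P m by rewrite /tau addrCA addrAC subrr add0r.
  by apply: (subspB hWperp); [apply: proj_orth hP m | exact/affineP].
have hy : E y.
  have -> : y = (a - ub) - (b - ub) by rewrite opprB addrA subrK.
  by apply: (subspB hE); apply/affineP.
have hsum : x + p + y = r + tau.
  by rewrite /x /p /y /r !addrA !subrK [LHS]addrAC [in LHS](addrAC m).
have hp : `|p - P p| <= gam.
  have hq : ip p (p - P p) = `|p - P p| ^+ 2.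
    have {1}-> : p = (p - P p) + P p by rewrite subrK.
    rewrite ipDl // ip_norm // (orth_ip hip (proj_orth hP p) (proj_mem hP p)).
    by rewrite addr0.
  have := hperp (p - P p) 0 (proj_orth hP p) (proj1 hE).
  rewrite addr0 hq ger0_norm ?sqr_ge0 // => hle.
  by have := normr_ge0 (p - P p); rewrite expr2 in hle; nra.
have hpy : `|ip p (P y)| <= gam * `|P y|.
  have := hperp (- (y - P y)) y (subspN hWperp (proj_orth hP y)) hy.
  by rewrite opprB subrK.
have := pbdw_geometry hip hW hP hmu hs hs2 (ltW hg) htau hx (hstable hy) hsum hp hpy.
suff -> : tau - x = z - m by [].
by rewrite /x opprB addrCA (addrC m) opprD addNKr.
Qed.

Lemma pbdw_error m b : affine ub E b -> `|z - m| <= mu * (`|m - b| + `|w - P m|).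
Proof.
move=> hb; apply/ler_addgt0Pr => e he.
have hC : 0 < 1 + 2 * s by have := sqrtr_ge0 (mu ^+ 2 - 1); rewrite /s; lra.
have := pbdw_error_slack m hb (divr_gt0 he hC).
by rewrite [_ * (e / _)]mulrC divfK // gt_eqF.
Qed.

End PBDWEstimate.

Lemma mu_stable (R : realType) (V : normedModType R) (ip : V -> V -> R)
  (W : set V) (P : V -> V) (E : set V) (mu0 : R) :
  is_orth_proj ip W P -> (mu ip W P E < +oo)%E -> (mu ip W P E <= mu0%:E)%E ->
  0 <= mu0 -> forall y, E y -> `|y| <= mu0 * `|P y|.
Proof.
move=> hP hfin hle h0 y hy.
have [->|hy0] := eqVneq y 0; first by rewrite normr0; apply: mulr_ge0.
move: hfin hle; rewrite /mu.
case: asboolP => [hE0|_]; first by move: hy0; rewrite hE0 in hy; rewrite hy eqxx.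
case: asboolP => [_|hWperp]; first by rewrite ltxx.
move=> _ hsup.
have hPy : P y != 0.
  apply/eqP => hP0; apply: hWperp; exists y; split => //; first exact/eqP.
  by have := proj_orth hP y; rewrite hP0 subr0.
have hratio : ((`|y| / `|P y|)%:E <= mu0%:E)%E.
  apply: le_trans hsup; apply: ereal_sup_ubound; exists y => //; split => //.
  by move=> /= h; move: hy0; rewrite h eqxx.
by rewrite lee_fin ler_pdivrMr ?normr_gt0 // in hratio.
Qed.

(* Some reduced model produces a PBDW estimate from the data
   [P u + eta] lying within [mu (eps + eps_model + eps_noise)] of [M], up to
   any [del > 0]: take [k] with a point of [M_k] close to [u]. *)
Lemma near_manifold_estimate (R : realType) (V : normedModType R)
  (ip : V -> V -> R) (W : set V) (P : V -> V) (K : nat) (M : set V)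
  (Mk : 'I_K -> set V) (ubar : 'I_K -> V) (Vbar : 'I_K -> set V)
  (ustar : 'I_K -> V -> V) (mu eps eps_model eps_noise : R) (u eta w : V) :
  is_inner ip -> subsp W -> is_orth_proj ip W P -> 1 <= mu ->
  M `<=` \bigcup_(k in [set: 'I_K]) Mk k ->
  (forall k, subsp (Vbar k)) ->
  (forall k y, Vbar k y -> `|y| <= mu * `|P y|) ->
  (forall k x, Mk k x -> (dist x (affine (ubar k) (Vbar k)) <= eps%:E)%E) ->
  w = P u + eta ->
  (forall k, affine w (orth ip W) (ustar k w) /\
     forall v, affine w (orth ip W) v ->
       (dist (ustar k w) (affine (ubar k) (Vbar k))
        <= dist v (affine (ubar k) (Vbar k)))%E) ->
  (dist u M <= eps_model%:E)%E -> W eta -> `|eta| <= eps_noise ->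
  forall del, 0 < del -> exists k,
    (dist (ustar k w) M <= (mu * (eps + eps_model + eps_noise) + del)%:E)%E.
Proof.
move=> hip hW hP hmu hMk hVbar hstable happrox hwdef hustar hu heta heta_le del hdel.
have hw : W w by rewrite hwdef; apply: (subspD hW) => //; apply: proj_mem hP u.
set d1 := del / (2 * mu).
have hd1 : 0 < d1 by apply: divr_gt0 => //; lra.
have [mm hmm humm] : exists2 mm, M mm & `|u - mm| < eps_model + d1.
  by apply: dist_approx; apply: le_lt_trans hu _; rewrite lte_fin ltrDl.
have [k _ hmk] := hMk mm hmm.
have [b hb hmb] : exists2 b, affine (ubar k) (Vbar k) b & `|mm - b| < eps + d1.
  by apply: dist_approx; apply: le_lt_trans (happrox k mm hmk) _; rewrite lte_fin ltrDl.
have hdata : `|w - P mm| <= `|u - mm| + eps_noise.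
  have -> : w - P mm = P (u - mm) + eta by rewrite hwdef (projB hip hW hP) addrAC.
  by have := ler_normD (P (u - mm)) eta; have := norm_proj_le hip hP (u - mm); lra.
have [hzk hzmin] := hustar k.
have herr := pbdw_error hip hW hP (hVbar k) hmu (hstable k) hw hzk hzmin mm hb.
exists k; apply: le_trans (dist_le _ hmm) _; rewrite lee_fin.
have hmu_d1 : mu * (2 * d1) = del by rewrite /d1; field; rewrite gt_eqF //; lra.
have : mu * (`|mm - b| + `|w - P mm|) <= mu * (eps + d1 + (eps_model + d1 + eps_noise)).
  by apply: ler_wpM2l; lra.
nra.
Qed.

(* An estimate consistent with the data [P u + eta] and lying in the
   fattening [M_sig] is within [delta_sig + eps_noise] of [u], as soon as
   [sig] also accounts for [u + eta], i.e. [eps_model + eps_noise <= sig]. *)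
Lemma error_from_fattening (R : realType) (V : normedModType R)
  (ip : V -> V -> R) (W : set V) (P : V -> V) (M : set V)
  (u us eta : V) (eps_model eps_noise sig : R) :
  is_inner ip -> is_orth_proj ip W P -> `|eta| <= eps_noise ->
  (dist u M <= eps_model%:E)%E -> eps_model + eps_noise <= sig ->
  affine (P u + eta) (orth ip W) us -> (dist us M <= sig%:E)%E ->
  ((`|u - us|)%:E <= delta ip W M sig + eps_noise%:E)%E.
Proof.
move=> hip hP heta_le hu hsig hus hdus.
set ut := u + eta.
have hut : fattening M sig ut.
  apply: le_trans (dist_lip ut hu) _.
  by rewrite lee_fin /ut addrAC subrr add0r; lra.
have horth : orth ip W (ut - us).
  have -> : ut - us = (u - P u) - (us - (P u + eta)).
    by rewrite [in RHS]opprB [in RHS]addrA -[in RHS](addrA u) addKr.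
  by apply: (subspB (subsp_orth W hip)); [apply: proj_orth hP u | exact/affineP].
have hdelta : ((`|ut - us|)%:E <= delta ip W M sig)%E.
  by apply: ereal_sup_ubound; exists ut, us; split.
apply: le_trans (leeD hdelta (lexx _)); rewrite -EFinD lee_fin.
have -> : u - us = (ut - us) - eta by rewrite /ut addrAC addrK.
by have := ler_normB (ut - us) eta; lra.
Qed.

Lemma surrogate_selection (R : realType) (V : normedModType R) (M : set V)
  (K : nat) (c : 'I_K -> V) (S : V -> R) (r_lo r_hi b : R) :
  0 < r_lo -> r_lo <= r_hi ->
  (forall v, (r_lo%:E * dist v M <= (S v)%:E)%E /\ ((S v)%:E <= r_hi%:E * dist v M)%E) ->
  (forall del, 0 < del -> exists k, (dist (c k) M <= (b + del)%:E)%E) ->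
  forall ks, (forall k, S (c ks) <= S (c k)) ->
  (dist (c ks) M <= (r_hi / r_lo * b)%:E)%E.
Proof.
move=> hlo hr hS hnear ks hks; apply/lee_addgt0Pr => e he.
have hhi : 0 < r_hi by lra.
have [k hk] := hnear (e * r_lo / r_hi) (divr_gt0 (mulr_gt0 he hlo) hhi).
have hchain : (r_lo%:E * dist (c ks) M <= (r_hi * (b + e * r_lo / r_hi))%:E)%E.
  apply: le_trans (hS (c ks)).1 _; apply: le_trans (_ : (S (c k))%:E <= _)%E.
    by rewrite lee_fin.
  apply: le_trans (hS (c k)).2 _; rewrite EFinM lee_wpmul2l // lee_fin; lra.
rewrite -lee_pdivlMl // -EFinM in hchain.
rewrite -EFinD; suff -> : r_hi / r_lo * b + e = r_lo^-1 * (r_hi * (b + e * r_lo / r_hi)).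
  exact: hchain.
by field; apply/andP; split; apply: lt0r_neq0.
Qed.

Lemma ideal_selection (R : realType) (V : normedModType R) (M : set V)
  (K : nat) (c : 'I_K -> V) (b : R) :
  (forall del, 0 < del -> exists k, (dist (c k) M <= (b + del)%:E)%E) ->
  forall ks, (forall k, (dist (c ks) M <= dist (c k) M)%E) ->
  (dist (c ks) M <= b%:E)%E.
Proof.
move=> hnear ks hks; apply/lee_addgt0Pr => e he.
by have [k hk] := hnear e he; rewrite -EFinD; apply: le_trans (hks k) hk.
Qed.

Unset Implicit Arguments.
Set Strict Implicit.

Theorem theorem3p5
  (R : realType) (V : completeNormedModType R)
  (ip : V -> V -> R) (hip : is_inner ip)
  (d : nat) (Y : set 'rV[R]_d) (hY : compact Y)
  (uy : 'rV[R]_d -> V) (huy : {within Y, continuous uy})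
  (M : set V) (hMdef : M = uy @` Y)
  (m : nat) (W : set V) (hW : is_subspace_dim W m)
  (PW : V -> V) (hPW : is_orth_proj ip W PW)
  (K : nat) (Mk : 'I_K -> set V) (hMk : M = \bigcup_(k in [set: 'I_K]) Mk k)
  (ubar : 'I_K -> V) (n : 'I_K -> nat) (Vbar : 'I_K -> set V)
  (hVbar : forall k, is_subspace_dim (Vbar k) (n k))
  (hn : forall k, (n k <= m)%N)
  (epsk : 'I_K -> R)
  (hepsk : forall k,
     (ereal_sup [set dist x (affine (ubar k) (Vbar k)) | x in Mk k] <= (epsk k)%:E)%E)
  (hmuk : forall k, (mu ip W PW (Vbar k) < +oo)%E)
  (eps mu0 : R) (heps : 0 < eps) (hmu0 : 1 <= mu0)
  (hadm : forall k, epsk k <= eps /\ (mu ip W PW (Vbar k) <= mu0%:E)%E)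
  (ustar : 'I_K -> V -> V)
  (hustar : forall k w, W w ->
     affine w (orth ip W) (ustar k w) /\
     (forall v, affine w (orth ip W) v ->
        (dist (ustar k w) (affine (ubar k) (Vbar k))
         <= dist v (affine (ubar k) (Vbar k)))%E))
  (S : V -> R) (r_lo r_hi : R) (hr_lo : 0 < r_lo) (hr : r_lo <= r_hi)
  (hS : forall v, [/\ 0 <= S v, (r_lo%:E * dist v M <= (S v)%:E)%E
                                & ((S v)%:E <= r_hi%:E * dist v M)%E])
  (u : V) (eps_model eps_noise : R) (hu : (dist u M <= eps_model%:E)%E)
  (eta : V) (heta : W eta) (heta_le : `|eta| <= eps_noise) :
  let w := PW u + eta in
  let rho := mu0 * (eps + eps_noise) + (mu0 + 1) * eps_model in
  (forall kstar : 'I_K, (forall k, S (ustar kstar w) <= S (ustar k w)) ->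
     ((`|u - ustar kstar w|)%:E <= delta ip W M ((r_hi / r_lo) * rho) + eps_noise%:E)%E)
  /\
  (forall kstar : 'I_K, (forall k, (dist (ustar kstar w) M <= dist (ustar k w) M)%E) ->
     ((`|u - ustar kstar w|)%:E <= delta ip W M (1 * rho) + eps_noise%:E)%E).
Proof.
move=> w rho.
have hWs : subsp W := subsp_dim hW.
have hw : W w by apply: (subspD hWs) => //; apply: proj_mem hPW u.
have hmodel0 : 0 <= eps_model by rewrite -lee_fin; apply: le_trans hu; apply: dist_ge0.
have hnoise0 : 0 <= eps_noise by apply: le_trans heta_le.
have hrho : eps_model + eps_noise <= rho by rewrite /rho; nra.
have hstable k : forall y, Vbar k y -> `|y| <= mu0 * `|PW y|.
  by apply: (mu_stable hPW (hmuk k) (hadm k).2); lra.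
have happrox k x : Mk k x -> (dist x (affine (ubar k) (Vbar k)) <= eps%:E)%E.
  move=> hx; have hsup : (dist x (affine (ubar k) (Vbar k)) <= (epsk k)%:E)%E.
    by apply: le_trans (hepsk k); apply: ereal_sup_ubound; exists x.
  by apply: le_trans hsup _; rewrite lee_fin; case: (hadm k).
have hcover : M `<=` \bigcup_(k in [set: 'I_K]) Mk k by rewrite hMk.
have hnear del : 0 < del -> exists k, (dist (ustar k w) M <= (rho + del)%:E)%E.
  move=> hdel; have [k hk] := near_manifold_estimate hip hWs hPW hmu0
    hcover (fun k => subsp_dim (hVbar k)) hstable happrox erefl
    (fun k => hustar k w hw) hu heta heta_le hdel.
  by exists k; apply: le_trans hk _; rewrite lee_fin lerD2r /rho; nra.
split => ks hks; apply: (error_from_fattening hip hPW heta_le hu) (hustar ks w hw).1 _.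
- have : 1 <= r_hi / r_lo by rewrite ler_pdivlMr // mul1r.
  nra.
- apply: (surrogate_selection hr_lo hr _ hnear hks) => v.
  by case: (hS v).
- by rewrite mul1r.
- by rewrite mul1r; apply: ideal_selection hnear ks hks.
Qed.
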